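(* Fix integers $d\geq 2$ and $n\geq d+2$. Let $X=\{x_i\}_{i\in[n]}$ be a configuration in the unit sphere $S^{d-1}\subseteq\mathbb{R}^d$, and suppose there exists a partition $[n]=A\sqcup B$ with $A,B$ nonempty such that $K:=\operatorname{conv}\{x_i\}_{i\in A}\cap\operatorname{conv}\{x_i\}_{i\in B}$ is nonempty and $0\notin K$. Then $\delta(X)<1$.
   Context: $[n]=\{1,\ldots,n\}$. For a configuration $X=\{x_i\}_{i\in[n]}$ in $S^{d-1}$, $\delta(X):=\min_{j\in[n]}\operatorname{dist}(x_j,\operatorname{conv}\{x_i\}_{i\in[n]\setminus\{j\}})$, with Euclidean distance. *)

From HB Require Import structures.
From mathcomp Require Import all_boot all_order all_algebra.
From mathcomp Require Import boolp classical_sets reals.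
Set Implicit Arguments. Unset Strict Implicit. Unset Printing Implicit Defensive.
Import Order.TTheory GRing.Theory Num.Theory.
Local Open Scope ring_scope.
Local Open Scope classical_set_scope.

Definition enorm (R : realType) (d : nat) (v : 'rV[R]_d) : R :=
  Num.sqrt (\sum_(k < d) v ord0 k ^+ 2).

Definition conv (R : realType) (d n : nat) (x : 'I_n -> 'rV[R]_d)
    (I : {set 'I_n}) : set 'rV[R]_d :=
  [set y | exists l : 'I_n -> R,
     (forall i, 0 <= l i) /\ (forall i, i \notin I -> l i = 0) /\
     \sum_(i < n) l i = 1 /\ y = \sum_(i < n) l i *: x i].

Definition dist_to (R : realType) (d : nat) (p : 'rV[R]_d) (S : set 'rV[R]_d) : R :=
  inf [set enorm (p - y) | y in S].

Definition delta (R : realType) (d n : nat) (x : 'I_n -> 'rV[R]_d) : R :=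
  inf (range (fun j : 'I_n => dist_to (x j) (conv x [set~ j]%SET))).

From HB Require Import structures.
From mathcomp Require Import all_boot all_order all_algebra.
From mathcomp Require Import boolp classical_sets reals.
From mathcomp Require Import ring lra.
Set Implicit Arguments. Unset Strict Implicit. Unset Printing Implicit Defensive.
Import Order.TTheory GRing.Theory Num.Theory.
Local Open Scope ring_scope.
Local Open Scope classical_set_scope.

(* Pick p in K; p <> 0 since 0 is not in K.  The linear functional <., p> is
   maximised over conv{x_i}_{i in A} at some vertex x_j, so
   |p|^2 <= <x_j, p>, whence |x_j - p|^2 = 1 - 2<x_j, p> + |p|^2 <= 1 - |p|^2 < 1.
   As p lies in conv{x_i}_{i in B}, which avoids j, delta(X) <= |x_j - p| < 1. *)

Section DotProduct.
Variables (R : realType) (d : nat).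

Definition dotp (u v : 'rV[R]_d) : R := \sum_(k < d) u ord0 k * v ord0 k.

Lemma enorm_ge0 (v : 'rV[R]_d) : 0 <= enorm v.
Proof. exact: sqrtr_ge0. Qed.

Lemma dotpvv_ge0 (v : 'rV[R]_d) : 0 <= dotp v v.
Proof. by apply: sumr_ge0 => k _; rewrite -expr2 sqr_ge0. Qed.

Lemma dotpvv_gt0 (v : 'rV[R]_d) : v != 0 -> 0 < dotp v v.
Proof.
move=> v_neq0; rewrite lt_def dotpvv_ge0 andbT.
apply: contra v_neq0 => /eqP /psumr_eq0P vv0; apply/eqP/rowP => k.
have /eqP := vv0 (fun i _ => sqr_ge0 (v ord0 i)) k isT.
by rewrite mulf_eq0 orbb mxE (ord1 ord0) => /eqP.
Qed.

Lemma sqr_enorm (v : 'rV[R]_d) : enorm v ^+ 2 = dotp v v.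
Proof.
rewrite sqr_sqrtr; last by apply: sumr_ge0 => k _; rewrite sqr_ge0.
by apply: eq_bigr => k _; rewrite expr2.
Qed.

Lemma dotp_suml (n : nat) (l : 'I_n -> R) (x : 'I_n -> 'rV[R]_d) v :
  dotp (\sum_(i < n) l i *: x i) v = \sum_(i < n) l i * dotp (x i) v.
Proof.
rewrite /dotp; under eq_bigr => k _ do rewrite summxE mulr_suml.
rewrite exchange_big /=; apply: eq_bigr => i _.
by rewrite mulr_sumr; apply: eq_bigr => k _; rewrite mxE mulrA.
Qed.

Lemma dotpBB (u v : 'rV[R]_d) :
  dotp (u - v) (u - v) = dotp u u - 2 * dotp u v + dotp v v.
Proof.
rewrite /dotp mulr_sumr -sumrN -!big_split /=; apply: eq_bigr => k _.
by rewrite !mxE; ring.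
Qed.

Lemma enorm_sub_lt1 (u v : 'rV[R]_d) :
  enorm u = 1 -> v != 0 -> dotp v v <= dotp u v -> enorm (u - v) < 1.
Proof.
move=> u1 v_neq0 vv_le_uv.
have uu1 : dotp u u = 1 by rewrite -sqr_enorm u1 expr1n.
have vv_gt0 := dotpvv_gt0 v_neq0.
rewrite -(ltr_pXn2r (ltn0Sn 1)) ?nnegrE ?enorm_ge0 // expr1n sqr_enorm.
by rewrite dotpBB uu1; lra.
Qed.

End DotProduct.

Section ConvexHull.
Variables (R : realType) (d n : nat) (x : 'I_n -> 'rV[R]_d).

Lemma conv_subset (I J : {set 'I_n}) :
  I \subset J -> conv x I `<=` conv x J.
Proof.
move=> /fintype.subsetP IJ y [l [l_ge0 [l_out [l_sum1 ->]]]].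
exists l; split=> //; split=> // i iJ; apply: l_out.
by apply: contra iJ; apply: IJ.
Qed.

Lemma conv_dotp_le_vertex (I : {set 'I_n}) y v :
  conv x I y -> exists2 j, j \in I & dotp y v <= dotp (x j) v.
Proof.
move=> [l [l_ge0 [l_out [l_sum1 ->]]]].
have [i0 i0I] : exists i0, i0 \in I.
  apply/set0Pn; apply: contra_eqN l_sum1 => /eqP I0.
  by rewrite big1 1?eq_sym ?oner_neq0 // => i _; rewrite l_out // I0 inE.
have [j jI j_max] := @arg_maxP _ _ _ i0 (mem I) (fun i => dotp (x i) v) i0I.
exists j => //; rewrite dotp_suml.
rewrite -[dotp (x j) v]mul1r -l_sum1 mulr_suml; apply: ler_sum => i _.
have [iI|iI] := boolP (i \in I); first by apply: ler_wpM2l; [exact: l_ge0 | exact: j_max].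
by rewrite l_out // !mul0r.
Qed.

Lemma dist_to_ge0 (p : 'rV[R]_d) S : 0 <= dist_to p S.
Proof.
have [[y Sy]|S0] := pselect (S !=set0).
  apply: lb_le_inf; first by exists (enorm (p - y)), y.
  by move=> _ [z _ <-]; apply: enorm_ge0.
rewrite /dist_to; suff -> : [set enorm (p - y) | y in S] = set0 by rewrite inf0.
by apply/seteqP; split => // r [z Sz _]; apply: S0; exists z.
Qed.

Lemma dist_to_le (p y : 'rV[R]_d) S : S y -> dist_to p S <= enorm (p - y).
Proof.
move=> Sy; apply: ge_inf; last by exists y.
by exists 0 => _ [z _ <-]; apply: enorm_ge0.
Qed.

Lemma delta_le_dist_to j : delta x <= dist_to (x j) (conv x [set~ j]%SET).
Proof.
apply: ge_inf; last by exists j.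
by exists 0 => _ [i _ <-]; apply: dist_to_ge0.
Qed.

End ConvexHull.

Theorem lemma3 (R : realType) (d n : nat) (x : 'I_n -> 'rV[R]_d)
  (hd : (2 <= d)%N) (hn : (d + 2 <= n)%N)
  (hsphere : forall i, enorm (x i) = 1)
  (A : {set 'I_n})
  (hA : (0 < #|A|)%N) (hB : (0 < #|(~: A)%SET|)%N)
  (hK : conv x A `&` conv x (~: A)%SET !=set0)
  (h0 : ~ (conv x A `&` conv x (~: A)%SET) 0) :
  delta x < 1.
Proof.
have [p [pA pB]] := hK.
have p_neq0 : p != 0 by apply: contra_notN h0 => /eqP <-.
have [j jA p_le_j] := conv_dotp_le_vertex p pA.
have pj : conv x [set~ j]%SET p.
  apply: conv_subset pB; apply/fintype.subsetP => i; rewrite !inE.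
  by apply: contraNneq => ->.
apply: le_lt_trans (delta_le_dist_to x j) _.
apply: le_lt_trans (dist_to_le (x j) pj) _.
exact: enorm_sub_lt1.
Qed.
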